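(* Let $\kappa$ be a regular cardinal. For every $\alpha<\kappa^+$ there is a $\kappa$-Borel set $R_\alpha\subseteq\kappa^\kappa\times\kappa^\kappa$ which is universal for $\kappa$-$\Sigma_\alpha$, i.e. for every $A\in\kappa$-$\Sigma_\alpha$ there is $\xi\in\kappa^\kappa$ such that for all $\eta\in\kappa^\kappa$: $\eta\in A$ iff $(\eta,\xi)\in R_\alpha$.
   Context: Basic $\kappa$-open sets: $N_\eta=\{\zeta\in\kappa^\kappa\mid\eta\subseteq\zeta\}$ for $\eta:X\to\kappa$, $X\subseteq\kappa$, $|X|<\kappa$, and $\emptyset$; in $\kappa^\kappa\times\kappa^\kappa$ they are products $N_\eta\times N_\xi$. The $\kappa$-Borel sets form the smallest class containing the basic $\kappa$-open sets and closed under complements and unions and intersections of at most $\kappa$ sets. Hierarchy: $\kappa$-$\Sigma_0$ is the collection of sets $N_{\{(i,j)\}}=\{f\in\kappa^\kappa\mid f(i)=j\}$, $i,j<\kappa$. If $\alpha$ is even, $\kappa$-$\Sigma_{\alpha+1}$ is the collection of unions of $\kappa$ many $\kappa$-$\Sigma_\alpha$ sets; if $\alpha$ is odd, $\kappa$-$\Sigma_{\alpha+1}$ is the collection of intersections of $\kappa$ many $\kappa$-$\Sigma_\alpha$ sets; if $\alpha$ is a limit, $\kappa$-$\Sigma_\alpha=\bigcup_{\beta<\alpha}\kappa$-$\Sigma_\beta$. (An ordinal is even/odd according to the parity of its finite part.) *)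

Definition injective {A B : Type} (f : A -> B) : Prop :=
  forall x y, f x = f y -> x = y.

Definition card_le (A B : Type) : Prop := exists f : A -> B, injective f.

Definition card_lt (A B : Type) : Prop := card_le A B /\ ~ card_le B A.

Definition small {K : Type} (X : K -> Prop) : Prop := card_lt {x : K | X x} K.

(** K (viewed as the cardinal kappa = |K|) is an infinite regular cardinal:
    kappa is not the union of fewer than kappa sets each of size < kappa. *)
Definition regular (K : Type) : Prop :=
  card_le nat K /\
  forall (I : Type) (F : I -> K -> Prop),
    card_lt I K -> (forall i, small (F i)) -> exists x : K, forall i, ~ F i x.

(** zeta extends the partial function eta = h restricted to X *)
Definition extends {K : Type} (X : K -> Prop) (h : K -> K) (zeta : K -> K) : Prop :=
  forall x, X x -> zeta x = h x.

(** kappa-Borel subsets of kappa^kappa x kappa^kappa: smallest class containing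
    the basic open sets N_eta x N_xi (|dom eta|, |dom xi| < kappa) and the empty
    set, closed under complements and unions / intersections of at most kappa sets.
    (Membership is stated up to extensional equality of sets.) *)
Inductive BorelP (K : Type) : ((K -> K) * (K -> K) -> Prop) -> Prop :=
| BP_basic (X1 : K -> Prop) (h1 : K -> K) (X2 : K -> Prop) (h2 : K -> K)
    (A : (K -> K) * (K -> K) -> Prop) :
    small X1 -> small X2 ->
    (forall p, A p <-> (extends X1 h1 (fst p) /\ extends X2 h2 (snd p))) ->
    BorelP K A
| BP_empty (A : (K -> K) * (K -> K) -> Prop) :
    (forall p, ~ A p) -> BorelP K A
| BP_compl (A B : (K -> K) * (K -> K) -> Prop) :
    BorelP K B -> (forall p, A p <-> ~ B p) -> BorelP K A
| BP_union (I : Type) (F : I -> (K -> K) * (K -> K) -> Prop)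
    (A : (K -> K) * (K -> K) -> Prop) :
    card_le I K -> (forall i, BorelP K (F i)) ->
    (forall p, A p <-> exists i, F i p) -> BorelP K A
| BP_inter (I : Type) (F : I -> (K -> K) * (K -> K) -> Prop)
    (A : (K -> K) * (K -> K) -> Prop) :
    card_le I K -> (forall i, BorelP K (F i)) ->
    (forall p, A p <-> forall i, F i p) -> BorelP K A.

(** An ordinal alpha < kappa^+ is represented as (the order type of) a strict
    well-order [lt] on a type T with |T| <= kappa. The ordinals beta <= alpha are
    represented by [option T]: [Some t] is the order type of {s | lt s t},
    [None] is alpha itself. *)
Definition well_order {T : Type} (lt : T -> T -> Prop) : Prop :=
  (forall a, ~ lt a a) /\
  (forall a b c, lt a b -> lt b c -> lt a c) /\
  (forall a b, lt a b \/ a = b \/ lt b a) /\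
  well_founded lt.

Definition olt {T : Type} (lt : T -> T -> Prop) (x y : option T) : Prop :=
  match x, y with
  | Some a, Some b => lt a b
  | Some _, None => True
  | None, _ => False
  end.

Definition is_zero {T} (lt : T -> T -> Prop) (b : option T) : Prop :=
  forall g, ~ olt lt g b.

Definition is_succ_of {T} (lt : T -> T -> Prop) (b g : option T) : Prop :=
  olt lt g b /\ forall d, olt lt d b -> d = g \/ olt lt d g.

Definition is_limit {T} (lt : T -> T -> Prop) (b : option T) : Prop :=
  (exists g, olt lt g b) /\
  forall g, olt lt g b -> exists d, olt lt g d /\ olt lt d b.

(** Parity of an ordinal = parity of its finite part
    (0 and limits are even; beta+1 has the opposite parity of beta). *)
Inductive even_ord {T} (lt : T -> T -> Prop) : option T -> Prop :=
| ev_zero b : is_zero lt b -> even_ord lt b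
| ev_limit b : is_limit lt b -> even_ord lt b
| ev_succ b g : is_succ_of lt b g -> odd_ord lt g -> even_ord lt b
with odd_ord {T} (lt : T -> T -> Prop) : option T -> Prop :=
| od_succ b g : is_succ_of lt b g -> even_ord lt g -> odd_ord lt b.

Inductive Sigma (K : Type) {T : Type} (lt : T -> T -> Prop)
  : option T -> ((K -> K) -> Prop) -> Prop :=
| Sig_zero b (i j : K) (A : (K -> K) -> Prop) :
    is_zero lt b -> (forall f, A f <-> f i = j) -> Sigma K lt b A
| Sig_succ_even b g (F : K -> (K -> K) -> Prop) (A : (K -> K) -> Prop) :
    is_succ_of lt b g -> even_ord lt g -> (forall k, Sigma K lt g (F k)) ->
    (forall f, A f <-> exists k, F k f) -> Sigma K lt b A
| Sig_succ_odd b g (F : K -> (K -> K) -> Prop) (A : (K -> K) -> Prop) :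
    is_succ_of lt b g -> odd_ord lt g -> (forall k, Sigma K lt g (F k)) ->
    (forall f, A f <-> forall k, F k f) -> Sigma K lt b A
| Sig_limit b g (A : (K -> K) -> Prop) :
    is_limit lt b -> olt lt g b -> Sigma K lt g A -> Sigma K lt b A.

(* By well-founded induction on the level b <= alpha, build a Borel set U_b from
   sets U_t (t < b).  A code xi carries, in a few fixed coordinates, a tag telling
   whether A is a basic set {f | f i = j}, a union or an intersection of kappa
   many sets of level t, together with i, j or t, and in kappa many disjoint
   slices the codes of the pieces; limit levels reduce to unions of one repeated
   piece.  Cutting K into kappa disjoint slices needs an injection K * K -> K
   (Hessenberg).  For it, take by Zorn a maximal injective pairing function on
   some B containing a copy of nat: if B embedded into its complement via g, the
   pairing would extend to the union of B and g(B); so the complement embeds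
   into B, and then K embeds into B + B, hence into B * B, hence into B. *)

From Stdlib Require Import Classical ClassicalEpsilon FunctionalExtensionality
  PropExtensionality ProofIrrelevance Cantor.
From mathcomp Require classical_sets.

Local Notation pset K := ((K -> K) * (K -> K) -> Prop).

Section Zorn.
Context {T : Type}.
Implicit Types (X M N : T -> Prop) (F : (T -> Prop) -> Prop).

Definition chain F : Prop :=
  forall X Y, F X -> F Y -> (forall t, X t -> Y t) \/ (forall t, Y t -> X t).

Definition bigunion F : T -> Prop := fun t => exists2 X, F X & X t.

Lemma chain_pairwise F (R : T -> T -> Prop) :
  chain F -> (forall X, F X -> forall u v, X u -> X v -> R u v) ->
  forall u v, bigunion F u -> bigunion F v -> R u v.
Proof.
  intros Fchain FR u v [X FX Xu] [Y FY Yv].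
  destruct (Fchain X Y FX FY) as [XY|YX].
  - exact (FR Y FY u v (XY u Xu) Yv).
  - exact (FR X FX u v Xu (YX v Yv)).
Qed.

Lemma zorn_chain_union (P : (T -> Prop) -> Prop) :
  (forall F, (forall X, F X -> P X) -> chain F -> P (bigunion F)) ->
  exists M, P M /\ forall N, (forall t, M t -> N t) -> P N -> forall t, N t -> M t.
Proof.
  intros Pchain.
  destruct (@classical_sets.Zorn_bigcup T P Pchain) as [M [PM Mmax]].
  exists M; split; [exact PM|].
  intros N MN PN t Nt. apply NNPP; intros nMt.
  apply (Mmax N); [|exact PN].
  split; [exact MN|]. intros NM. exact (nMt (NM t Nt)).
Qed.

Lemma zorn_above (P : (T -> Prop) -> Prop) X0 :
  P X0 ->
  (forall F, (forall X, F X -> P X) -> chain F -> (exists X, F X) -> P (bigunion F)) ->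
  exists M, (forall t, X0 t -> M t) /\ P M /\
    forall N, (forall t, M t -> N t) -> P N -> forall t, N t -> M t.
Proof.
  intros PX0 Pchain.
  pose (Q X := (forall t, ~ X t) \/ ((forall t, X0 t -> X t) /\ P X)).
  destruct (zorn_chain_union Q) as [M [QM Mmax]].
  - intros F FQ Fchain.
    destruct (classic (exists t, bigunion F t)) as [[t [X FX Xt]]|Fempty].
    + (* the empty members of F do not contribute to its union *)
      pose (F' X := F X /\ (forall t, X0 t -> X t) /\ P X).
      assert (FQ' : forall X t, F X -> X t -> F' X).
      { intros Y s FY Ys. destruct (FQ Y FY) as [Yempty|HY]; [destruct (Yempty s Ys)|].
        split; [exact FY|exact HY]. }
      assert (E : bigunion F' = bigunion F).
      { apply functional_extensionality; intros s.
        apply propositional_extensionality; split.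
        - intros [Y [FY _] Ys]. exists Y; assumption.
        - intros [Y FY Ys]. exists Y; [exact (FQ' Y s FY Ys)|exact Ys]. }
      right. rewrite <- E. split.
      * intros s X0s. exists X; [exact (FQ' X t FX Xt)|].
        exact (proj1 (proj2 (FQ' X t FX Xt)) s X0s).
      * apply Pchain.
        -- intros Y [_ [_ PY]]. exact PY.
        -- intros Y Z [FY _] [FZ _]. exact (Fchain Y Z FY FZ).
        -- exists X. exact (FQ' X t FX Xt).
    + left. intros t Ft. apply Fempty. exists t. exact Ft.
  - destruct QM as [Mempty|[X0M PM]].
    + exists X0. split; [auto|split; [exact PX0|]].
      intros N X0N PN t Nt.
      assert (MN : forall s, M s -> N s) by (intros s Ms; destruct (Mempty s Ms)).
      destruct (Mempty t (Mmax N MN (or_intror (conj X0N PN)) t Nt)).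
    + exists M. split; [exact X0M|split; [exact PM|]].
      intros N MN PN. apply Mmax; [exact MN|].
      right. split; [intros t X0t; exact (MN t (X0M t X0t))|exact PN].
Qed.

End Zorn.

Definition embeds {A B : Type} (X : A -> Prop) (Y : B -> Prop) : Prop :=
  exists g : A -> B, (forall x, X x -> Y (g x)) /\
    forall x y, X x -> X y -> g x = g y -> x = y.

Lemma choice_on {A B : Type} (b0 : B) (X : A -> Prop) (R : A -> B -> Prop) :
  (forall x, X x -> exists y, R x y) -> exists g : A -> B, forall x, X x -> R x (g x).
Proof.
  intros HR. exists (fun x => epsilon (inhabits b0) (R x)).
  intros x Xx. apply epsilon_spec. exact (HR x Xx).
Qed.

Lemma inverse_on {A B : Type} (a0 : A) (X : A -> Prop) (g : A -> B) :
  (forall x y, X x -> X y -> g x = g y -> x = y) ->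
  exists ginv : B -> A, forall x, X x -> ginv (g x) = x.
Proof.
  intros ginj.
  destruct (choice_on a0 (fun y => exists x, X x /\ g x = y)
              (fun y x => X x /\ g x = y)) as [ginv Hginv].
  - intros y [x Hx]. exists x. exact Hx.
  - exists (fun y => ginv y). intros x Xx.
    destruct (Hginv (g x) (ex_intro _ x (conj Xx eq_refl))) as [X' E].
    exact (ginj _ _ X' Xx E).
Qed.

Lemma exists_extension {A B C : Type} (a0 : A) (phi : A -> B) (h : A -> C) :
  injective phi -> exists xi : B -> C, forall a, xi (phi a) = h a.
Proof.
  intros phi_inj.
  destruct (inverse_on a0 (fun _ => True) phi) as [phiinv Hphiinv].
  - intros x y _ _. exact (phi_inj x y).
  - exists (fun y => h (phiinv y)). intros a. rewrite Hphiinv; trivial.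
Qed.

Definition partial_injection {A B : Type} (X : A -> Prop) (Y : B -> Prop)
  (G : A * B -> Prop) : Prop :=
  (forall x y, G (x, y) -> X x /\ Y y) /\
  (forall x y y', G (x, y) -> G (x, y') -> y = y') /\
  (forall x x' y, G (x, y) -> G (x', y) -> x = x').

Lemma partial_injection_union {A B : Type} (X : A -> Prop) (Y : B -> Prop)
  (F : (A * B -> Prop) -> Prop) :
  (forall G, F G -> partial_injection X Y G) -> chain F ->
  partial_injection X Y (bigunion F).
Proof.
  intros FP Fchain. split; [|split].
  - intros x y [G FG Gxy]. exact (proj1 (FP G FG) x y Gxy).
  - intros x y y' Gxy Gxy'.
    apply (chain_pairwise F (fun u v => fst u = fst v -> snd u = snd v) Fchain)
      with (u := (x, y)) (v := (x, y')); auto.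
    intros G FG [x1 y1] [x2 y2] G1 G2 E. simpl in *. subst.
    exact (proj1 (proj2 (FP G FG)) x2 y1 y2 G1 G2).
  - intros x x' y Gxy Gx'y.
    apply (chain_pairwise F (fun u v => snd u = snd v -> fst u = fst v) Fchain)
      with (u := (x, y)) (v := (x', y)); auto.
    intros G FG [x1 y1] [x2 y2] G1 G2 E. simpl in *. subst.
    exact (proj2 (proj2 (FP G FG)) x1 x2 y2 G1 G2).
Qed.

Lemma embeds_total {A B : Type} (a0 : A) (b0 : B) (X : A -> Prop) (Y : B -> Prop) :
  embeds X Y \/ embeds Y X.
Proof.
  destruct (zorn_chain_union (partial_injection X Y)) as [M [[MXY [Mfun Minj]] Mmax]].
  { intros F FP Fchain. exact (partial_injection_union X Y F FP Fchain). }
  destruct (classic (forall x, X x -> exists y, M (x, y))) as [Mleft|Mleft].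
  { left. destruct (choice_on b0 X (fun x y => M (x, y)) Mleft) as [g Hg].
    exists g. split.
    - intros x Xx. exact (proj2 (MXY _ _ (Hg x Xx))).
    - intros x x' Xx Xx' E. apply (Minj x x' (g x) (Hg x Xx)).
      rewrite E. exact (Hg x' Xx'). }
  destruct (classic (forall y, Y y -> exists x, M (x, y))) as [Mright|Mright].
  { right. destruct (choice_on a0 Y (fun y x => M (x, y)) Mright) as [g Hg].
    exists g. split.
    - intros y Yy. exact (proj1 (MXY _ _ (Hg y Yy))).
    - intros y y' Yy Yy' E. apply (Mfun (g y) y y' (Hg y Yy)).
      rewrite E. exact (Hg y' Yy'). }
  (* an unmatched pair (x0, y0) could be added to M *)
  exfalso.
  apply not_all_ex_not in Mleft as [x0 Hx0]. apply imply_to_and in Hx0 as [Xx0 nx0].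
  apply not_all_ex_not in Mright as [y0 Hy0]. apply imply_to_and in Hy0 as [Yy0 ny0].
  pose (M' u := M u \/ u = (x0, y0)).
  assert (PM' : partial_injection X Y M').
  { split; [|split].
    - intros x y [H|H]; [exact (MXY x y H)|]. injection H as E1 E2; subst. auto.
    - intros x y y' [H|H] [H'|H'].
      + exact (Mfun x y y' H H').
      + injection H' as E1 E2; subst. destruct nx0. eauto.
      + injection H as E1 E2; subst. destruct nx0. eauto.
      + congruence.
    - intros x x' y [H|H] [H'|H'].
      + exact (Minj x x' y H H').
      + injection H' as E1 E2; subst. destruct ny0. eauto.
      + injection H as E1 E2; subst. destruct ny0. eauto.
      + congruence. }
  apply nx0. exists y0. apply (Mmax M' (fun u Mu => or_introl Mu) PM'). now right.
Qed.

Section Hessenberg.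
Variable K : Type.

Definition pairing (B : K -> Prop) (f : K -> K -> K) : Prop :=
  (forall a b, B a -> B b -> B (f a b)) /\
  (forall a b a' b', B a -> B b -> B a' -> B b' -> f a b = f a' b' -> a = a' /\ b = b').

Definition gdom (G : K * K * K -> Prop) (a : K) : Prop := exists c, G (a, a, c).

Definition pairing_graph (G : K * K * K -> Prop) : Prop :=
  (forall a b c c', G (a, b, c) -> G (a, b, c') -> c = c') /\
  (forall a b a' b' c, G (a, b, c) -> G (a', b', c) -> a = a' /\ b = b') /\
  (forall a b, gdom G a -> gdom G b -> exists c, G (a, b, c)) /\
  (forall a b c, G (a, b, c) -> gdom G a /\ gdom G b /\ gdom G c).

Definition graph_on (B : K -> Prop) (f : K -> K -> K) (u : K * K * K) : Prop :=
  let '(a, b, c) := u in B a /\ B b /\ f a b = c.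

Lemma gdom_graph_on B f a : gdom (graph_on B f) a <-> B a.
Proof.
  split; [intros [c [Ba _]]; exact Ba|intros Ba; exists (f a a); simpl; auto].
Qed.

Lemma pairing_graph_on B f : pairing B f -> pairing_graph (graph_on B f).
Proof.
  intros [fB finj]. split; [|split; [|split]].
  - intros a b c c' [_ [_ <-]] [_ [_ <-]]. reflexivity.
  - intros a b a' b' c [Ba [Bb <-]] [Ba' [Bb' E]]. apply finj; auto.
  - intros a b Ha Hb. rewrite gdom_graph_on in Ha, Hb. exists (f a b). simpl. auto.
  - intros a b c [Ba [Bb <-]]. rewrite !gdom_graph_on. auto.
Qed.

Lemma pairing_graph_union (F : (K * K * K -> Prop) -> Prop) :
  (forall G, F G -> pairing_graph G) -> chain F -> pairing_graph (bigunion F).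
Proof.
  intros FP Fchain.
  assert (gdom_union : forall G a, F G -> gdom G a -> gdom (bigunion F) a).
  { intros G a FG [c Gc]. exists c, G; assumption. }
  split; [|split; [|split]].
  - intros a b c c' H H'.
    apply (chain_pairwise F (fun u v => fst u = fst v -> snd u = snd v) Fchain)
      with (u := (a, b, c)) (v := (a, b, c')); auto.
    intros G FG [[a1 b1] c1] [[a2 b2] c2] G1 G2 E. simpl in *. injection E as -> ->.
    exact (proj1 (FP G FG) a2 b2 c1 c2 G1 G2).
  - intros a b a' b' c H H'.
    apply (chain_pairwise F (fun u v => snd u = snd v -> fst u = fst v) Fchain)
      with (u := (a, b, c)) (v := (a', b', c)) in H'; auto.
    + simpl in H'. injection H' as -> ->. auto.
    + intros G FG [[a1 b1] c1] [[a2 b2] c2] G1 G2 E. simpl in *. subst.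
      destruct (proj1 (proj2 (FP G FG)) a1 b1 a2 b2 c2 G1 G2) as [-> ->]. reflexivity.
  - intros a b [c Hc] [c' Hc'].
    apply (chain_pairwise F
      (fun u v => exists c, bigunion F (fst (fst u), fst (fst v), c)) Fchain)
      with (u := (a, a, c)) (v := (b, b, c')); auto.
    intros G FG [[a1 b1] c1] [[a2 b2] c2] G1 G2. simpl.
    destruct (FP G FG) as (_ & _ & Gsq & Grange).
    destruct (Gsq a1 a2 (proj1 (Grange _ _ _ G1)) (proj1 (Grange _ _ _ G2))) as [d Gd].
    exists d, G; assumption.
  - intros a b c [G FG Gabc].
    destruct (FP G FG) as (_ & _ & _ & Grange).
    destruct (Grange a b c Gabc) as [Ha [Hb Hc]].
    split; [|split]; eapply gdom_union; eassumption.
Qed.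

Lemma pairing_of_graph (k0 : K) G :
  pairing_graph G -> exists f, pairing (gdom G) f /\
    forall a b, gdom G a -> gdom G b -> G (a, b, f a b).
Proof.
  intros (Gfun & Ginj & Gsq & Grange).
  destruct (choice_on k0 (fun u => gdom G (fst u) /\ gdom G (snd u))
              (fun u c => G (fst u, snd u, c))) as [f0 Hf0].
  { intros [a b] [Ha Hb]. exact (Gsq a b Ha Hb). }
  exists (fun a b => f0 (a, b)).
  assert (Hf : forall a b, gdom G a -> gdom G b -> G (a, b, f0 (a, b))).
  { intros a b Ha Hb. exact (Hf0 (a, b) (conj Ha Hb)). }
  split; [split|exact Hf].
  - intros a b Ha Hb. exact (proj2 (proj2 (Grange _ _ _ (Hf a b Ha Hb)))).
  - intros a b a' b' Ha Hb Ha' Hb' E. apply (Ginj a b a' b' (f0 (a, b))).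
    + exact (Hf a b Ha Hb).
    + rewrite E. exact (Hf a' b' Ha' Hb').
Qed.

Variable iota : nat -> K.
Hypothesis iota_inj : injective iota.

Lemma pairing_range_iota : exists f, pairing (fun a => exists n, iota n = a) f.
Proof.
  destruct (inverse_on 0 (fun _ => True) iota) as [iinv Hiinv].
  { intros m n _ _. apply iota_inj. }
  exists (fun a b => iota (Cantor.to_nat (iinv a, iinv b))). split.
  - intros a b _ _. eexists. reflexivity.
  - intros a b a' b' [m <-] [n <-] [m' <-] [n' <-] E.
    apply iota_inj, (f_equal Cantor.of_nat) in E.
    rewrite !Cantor.cancel_of_to, !Hiinv in E by trivial.
    injection E as -> ->. auto.
Qed.

Lemma maximal_pairing : exists B f, pairing B f /\ (forall n, B (iota n)) /\
  forall D h, pairing D h -> (forall a, B a -> D a) ->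
    (forall a b, B a -> B b -> h a b = f a b) -> forall a, D a -> B a.
Proof.
  destruct pairing_range_iota as [f0 Hf0].
  destruct (zorn_above pairing_graph (graph_on (fun a => exists n, iota n = a) f0))
    as (M & M0 & PM & Mmax).
  - exact (pairing_graph_on _ _ Hf0).
  - intros F FP Fchain _. exact (pairing_graph_union F FP Fchain).
  - destruct (pairing_of_graph (iota 0) M PM) as [f [Mf HMf]].
    exists (gdom M), f. split; [exact Mf|split].
    + intros n. exists (f0 (iota n) (iota n)). apply M0.
      split; [|split]; [eexists; reflexivity|eexists; reflexivity|reflexivity].
    + intros D h Dh MD hf a Da.
      assert (MDh : forall u, M u -> graph_on D h u).
      { intros [[a' b'] c] Mu.
        destruct (proj2 (proj2 (proj2 PM)) _ _ _ Mu) as [Ha [Hb _]].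
        split; [exact (MD a' Ha)|split; [exact (MD b' Hb)|]].
        rewrite (hf a' b' Ha Hb). exact (proj1 PM _ _ _ _ (HMf a' b' Ha Hb) Mu). }
      exists (h a a). apply (Mmax _ MDh (pairing_graph_on D h Dh)). simpl. auto.
Qed.

Section Extension.
Variables (B : K -> Prop) (f : K -> K -> K) (u0 u1 : K).
Hypotheses (Bf : pairing B f) (Bu0 : B u0) (Bu1 : B u1) (u01 : u0 <> u1).

Lemma pairing_sum_embedding (E : K -> Prop) (j : K -> K) :
  (forall x, E x -> ~ B x -> B (j x)) ->
  (forall x y, E x -> ~ B x -> E y -> ~ B y -> j x = j y -> x = y) ->
  embeds (fun x => B x \/ E x) B.
Proof.
  intros jB jinj. destruct Bf as [fB finj].
  exists (fun x => if excluded_middle_informative (B x) then f x u0 else f (j x) u1).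
  split.
  - intros x Hx. destruct (excluded_middle_informative (B x)) as [Bx|nBx]; auto.
    apply fB; [|exact Bu1]. destruct Hx as [Bx|Ex]; [contradiction|auto].
  - intros x y Hx Hy.
    destruct (excluded_middle_informative (B x)) as [Bx|nBx];
    destruct (excluded_middle_informative (B y)) as [By|nBy]; intros Exy.
    + apply finj in Exy; tauto.
    + destruct Hy as [|Ey]; [contradiction|].
      apply finj in Exy; auto. destruct (u01 (proj2 Exy)).
    + destruct Hx as [|Ex]; [contradiction|].
      apply finj in Exy; auto. destruct (u01 (eq_sym (proj2 Exy))).
    + destruct Hx as [|Ex]; [contradiction|]. destruct Hy as [|Ey]; [contradiction|].
      apply finj in Exy; auto. apply jinj; tauto.
Qed.

Lemma pairing_extension : embeds B (fun x => ~ B x) ->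
  exists D h, pairing D h /\ (forall a, B a -> D a) /\
    (forall a b, B a -> B b -> h a b = f a b) /\ exists a, D a /\ ~ B a.
Proof.
  intros [g [gB ginj]].
  pose (C y := exists x, B x /\ g x = y).
  destruct (inverse_on u0 B g ginj) as [ginv Hginv].
  destruct (pairing_sum_embedding C ginv) as [e [eB einj]].
  { intros y [x [Bx <-]] _. rewrite Hginv; assumption. }
  { intros y y' [x [Bx <-]] _ [x' [Bx' <-]] _. rewrite !Hginv by assumption. congruence. }
  (* new pairs are sent, via the embedding e into B, to the fresh copy C = g(B) *)
  exists (fun a => B a \/ C a).
  exists (fun a b => if excluded_middle_informative (B a /\ B b) then f a b else g (f (e a) (e b))).
  destruct Bf as [fB finj].
  assert (CB : forall y, C y -> ~ B y) by (intros y [x [Bx <-]]; exact (gB x Bx)).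
  split; [split|split; [|split]].
  - intros a b Ha Hb. destruct (excluded_middle_informative (B a /\ B b)) as [[Ba Bb]|_].
    + left. auto.
    + right. exists (f (e a) (e b)). auto.
  - intros a b a' b' Ha Hb Ha' Hb'.
    destruct (excluded_middle_informative (B a /\ B b)) as [[Ba Bb]|nB];
    destruct (excluded_middle_informative (B a' /\ B b')) as [[Ba' Bb']|nB']; intros Eh.
    + auto.
    + destruct (gB (f (e a') (e b'))); [auto|rewrite <- Eh; auto].
    + destruct (gB (f (e a) (e b))); [auto|rewrite Eh; auto].
    + apply ginj, finj in Eh; auto. destruct Eh as [Ea Eb]. auto.
  - auto.
  - intros a b Ba Bb. destruct (excluded_middle_informative (B a /\ B b)); tauto.
  - exists (g u0). split; [right; exists u0; auto|auto].
Qed.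

End Extension.

Theorem card_le_prod_self : card_le (K * K) K.
Proof.
  destruct maximal_pairing as (B & f & Bf & Biota & Bmax).
  assert (i01 : iota 0 <> iota 1) by (intros E; apply iota_inj in E; discriminate).
  destruct (embeds_total (iota 0) (iota 0) B (fun x => ~ B x)) as [BnB|[g [gB ginj]]].
  - destruct (pairing_extension B f (iota 0) (iota 1) Bf (Biota 0) (Biota 1) i01 BnB)
      as (D & h & Dh & BD & hf & a & Da & nBa).
    destruct (nBa (Bmax D h Dh BD hf a Da)).
  - destruct (pairing_sum_embedding B f (iota 0) (iota 1) Bf (Biota 0) (Biota 1) i01
                (fun x => ~ B x) g) as [e [eB einj]].
    + intros x nBx _. exact (gB x nBx).
    + intros x y nBx _ nBy _. exact (ginj x y nBx nBy).
    + assert (eB' : forall x, B (e x)) by (intros x; apply eB, classic).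
      exists (fun u => f (e (fst u)) (e (snd u))).
      intros [x y] [x' y'] E. simpl in E.
      destruct (proj2 Bf _ _ _ _ (eB' x) (eB' y) (eB' x') (eB' y') E) as [Ex Ey].
      apply einj in Ex; [|apply classic..]. apply einj in Ey; [|apply classic..].
      congruence.
Qed.

End Hessenberg.

Lemma sig_ext {A : Type} (X : A -> Prop) (u v : {x | X x}) :
  proj1_sig u = proj1_sig v -> u = v.
Proof. apply eq_sig_hprop. intros. apply proof_irrelevance. Qed.

Lemma card_le_sig {K : Type} (X : K -> Prop) : card_le {x | X x} K.
Proof. exists (@proj1_sig _ X). exact (sig_ext X). Qed.

Lemma small_empty {K : Type} (k0 : K) : small (fun _ : K => False).
Proof.
  split; [apply card_le_sig|]. intros [g _]. exact (proj2_sig (g k0)).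
Qed.

Lemma small_singleton {K : Type} {k0 k1 : K} (k01 : k0 <> k1) (a : K) :
  small (fun x => x = a).
Proof.
  split; [apply card_le_sig|]. intros [g ginj]. apply k01, ginj, sig_ext.
  rewrite (proj2_sig (g k0)), (proj2_sig (g k1)). reflexivity.
Qed.

Lemma small_image {K : Type} (k0 : K) (X : K -> Prop) (q : K -> K) :
  injective q -> small X -> small (fun y => exists x, X x /\ q x = y).
Proof.
  intros qinj [_ notK]. split; [apply card_le_sig|]. intros [g ginj]. apply notK.
  destruct (inverse_on k0 (fun _ => True) q) as [qinv Hqinv].
  { intros x y _ _. apply qinj. }
  assert (back : forall y, (exists x, X x /\ q x = y) -> X (qinv y)).
  { intros y [x [Xx <-]]. rewrite Hqinv; trivial. }
  exists (fun k => exist X (qinv (proj1_sig (g k))) (back _ (proj2_sig (g k)))).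
  intros k k' E. apply ginj, sig_ext.
  apply (f_equal (@proj1_sig _ _)) in E. simpl in E.
  destruct (proj2_sig (g k)) as [x [_ Ex]]. destruct (proj2_sig (g k')) as [x' [_ Ex']].
  rewrite <- Ex, <- Ex', !Hqinv in E by trivial. congruence.
Qed.

Lemma BorelP_ex {K I : Type} (F : I -> pset K) :
  card_le I K -> (forall i, BorelP K (F i)) -> BorelP K (fun p => exists i, F i p).
Proof.
  intros HI HF. apply (BP_union K I F _ HI HF). reflexivity.
Qed.

Lemma BorelP_all {K I : Type} (F : I -> pset K) :
  card_le I K -> (forall i, BorelP K (F i)) -> BorelP K (fun p => forall i, F i p).
Proof.
  intros HI HF. apply (BP_inter K I F _ HI HF). reflexivity.
Qed.

Lemma BorelP_reindex_snd {K : Type} (k0 : K) (q : K -> K)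
  (A : pset K) :
  injective q -> BorelP K A -> BorelP K (fun p => A (fst p, fun x => snd p (q x))).
Proof.
  intros qinj HA.
  induction HA as [X1 h1 X2 h2 A S1 S2 HA|A HA|A B HB IH HA|I F A HI HF IH HA|I F A HI HF IH HA].
  - destruct (inverse_on k0 (fun _ => True) q) as [qinv Hqinv].
    { intros x y _ _. apply qinj. }
    apply (BP_basic K X1 h1 (fun y => exists x, X2 x /\ q x = y) (fun y => h2 (qinv y))).
    + exact S1.
    + apply (small_image k0); assumption.
    + intros p. rewrite HA. simpl. unfold extends. split.
      * intros [H1 H2]. split; [exact H1|].
        intros y [x [Hx <-]]. rewrite Hqinv by trivial. exact (H2 x Hx).
      * intros [H1 H2]. split; [exact H1|].
        intros x Hx. rewrite <- (Hqinv x I) at 2. apply H2. exists x; auto.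
  - apply BP_empty. intros p. apply HA.
  - apply (BP_compl K _ _ IH). intros p. apply HA.
  - apply (BP_union K I _ _ HI IH). intros p. apply HA.
  - apply (BP_inter K I _ _ HI IH). intros p. apply HA.
Qed.

Section BorelClosure.
Context {K : Type} {k0 k1 : K} (k01 : k0 <> k1).

Lemma card_le_bool : card_le bool K.
Proof.
  exists (fun b : bool => if b then k0 else k1). intros [] [] E; congruence.
Qed.

Lemma BorelP_and (A B : pset K) :
  BorelP K A -> BorelP K B -> BorelP K (fun p => A p /\ B p).
Proof.
  intros HA HB. apply (BP_inter K bool (fun b => if b then A else B) _ card_le_bool).
  - intros []; assumption.
  - intros p. split; [intros [HAp HBp] []; assumption|intros H; exact (conj (H true) (H false))].
Qed.

Lemma BorelP_or (A B : pset K) :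
  BorelP K A -> BorelP K B -> BorelP K (fun p => A p \/ B p).
Proof.
  intros HA HB. apply (BP_union K bool (fun b => if b then A else B) _ card_le_bool).
  - intros []; assumption.
  - intros p. split.
    + intros [H|H]; [exists true|exists false]; exact H.
    + intros [[] H]; [left|right]; exact H.
Qed.

Lemma BorelP_fst_eq (x y : K) : BorelP K (fun p => fst p x = y).
Proof.
  apply (BP_basic K (fun z => z = x) (fun _ => y) (fun _ => False) (fun z => z)).
  - exact (small_singleton k01 x).
  - exact (small_empty k0).
  - intros p. unfold extends. split.
    + intros H. split; [intros z ->; exact H|intros _ []].
    + intros [H _]. exact (H x eq_refl).
Qed.

Lemma BorelP_snd_eq (x y : K) : BorelP K (fun p => snd p x = y).
Proof.
  apply (BP_basic K (fun _ => False) (fun z => z) (fun z => z = x) (fun _ => y)).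
  - exact (small_empty k0).
  - exact (small_singleton k01 x).
  - intros p. unfold extends. split.
    + intros H. split; [intros _ []|intros z ->; exact H].
    + intros [_ H]. exact (H x eq_refl).
Qed.

Lemma BorelP_eval (x y : K) :
  card_le (K * K) K -> BorelP K (fun p => fst p (snd p x) = snd p y).
Proof.
  intros KK. apply (BP_union K (K * K) (fun u p =>
           fst p (fst u) = snd u /\ snd p x = fst u /\ snd p y = snd u) _ KK).
  - intros u. apply BorelP_and; [apply BorelP_fst_eq|apply BorelP_and; apply BorelP_snd_eq].
  - intros p. split.
    + intros E. exists (snd p x, snd p y). auto.
    + intros [[a b] [E [-> ->]]]. exact E.
Qed.

End BorelClosure.

Lemma olt_wf {T : Type} (lt : T -> T -> Prop) :
  well_founded lt -> well_founded (olt lt).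
Proof.
  intros lt_wf.
  assert (AccSome : forall t, Acc (olt lt) (Some t)).
  { intros t. induction (lt_wf t) as [t _ IH]. constructor.
    intros [s|] H; [exact (IH s H)|destruct H]. }
  intros [t|]; [apply AccSome|]. constructor. intros [s|] H; [apply AccSome|destruct H].
Qed.

Lemma Sigma_cases (K : Type) (k0 : K) {T : Type} (lt : T -> T -> Prop)
  (b : option T) (A : (K -> K) -> Prop) :
  Sigma K lt b A ->
  (exists i j, forall f, A f <-> f i = j) \/
  (exists t (F : K -> (K -> K) -> Prop), olt lt (Some t) b /\
     (forall k, Sigma K lt (Some t) (F k)) /\ (forall f, A f <-> exists k, F k f)) \/
  (exists t (F : K -> (K -> K) -> Prop), olt lt (Some t) b /\
     (forall k, Sigma K lt (Some t) (F k)) /\ (forall f, A f <-> forall k, F k f)).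
Proof.
  intros [b' i j A' _ HA|b' g F A' [gb _] _ HF HA|b' g F A' [gb _] _ HF HA|b' g A' _ gb HA].
  - left. exists i, j. exact HA.
  - right; left. destruct g as [t|]; [|destruct gb]. exists t, F. auto.
  - right; right. destruct g as [t|]; [|destruct gb]. exists t, F. auto.
  - (* a set of a limit level is the union of copies of a set of a lower level *)
    right; left. destruct g as [t|]; [|destruct gb].
    exists t, (fun _ => A'). split; [exact gb|split; [auto|]].
    intros f. split; [intros Af; exists k0; exact Af|intros [_ Af]; exact Af].
Qed.

Section Universal.
Variables (K : Type) (iota : nat -> K) (psi : K * K -> K).
Hypotheses (iota_inj : injective iota) (psi_inj : injective psi).
Variables (T : Type) (lt : T -> T -> Prop) (e : T -> K).
Hypotheses (lt_wf : well_founded lt) (e_inj : injective e).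

Definition universal_for (b : option T) (U : pset K) : Prop :=
  forall A, Sigma K lt b A -> exists xi, forall eta, A eta <-> U (eta, xi).

Definition slot (k x : K) : K := psi (iota 0, psi (k, x)).
Definition tag (n : nat) : K := psi (iota 1, iota n).
Definition code_piece (xi : K -> K) (k : K) : K -> K := fun x => xi (slot k x).

(* A code xi records in xi (tag 0) whether the coded set is basic, a union or an
   intersection; a basic set {f | f i = j} has i = xi (tag 1) and j = xi (tag 2);
   otherwise xi (tag 1) = e t names the level t of the pieces, whose codes are the
   slices code_piece xi k. *)
Definition universal_step (V : T -> pset K) : pset K := fun p =>
  (snd p (tag 0) = iota 0 /\ fst p (snd p (tag 1)) = snd p (tag 2)) \/
  (snd p (tag 0) = iota 1 /\ exists t, snd p (tag 1) = e t /\
     exists k, V t (fst p, code_piece (snd p) k)) \/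
  (snd p (tag 0) = iota 2 /\ exists t, snd p (tag 1) = e t /\
     forall k, V t (fst p, code_piece (snd p) k)).

Lemma iota_neq m n : m <> n -> iota m <> iota n.
Proof. intros mn E. exact (mn (iota_inj m n E)). Qed.

Lemma slot_inj k : injective (slot k).
Proof.
  intros x y E. apply psi_inj in E. injection E as E. apply psi_inj in E.
  injection E as E. exact E.
Qed.

Lemma BorelP_universal_step (V : T -> pset K) :
  (forall t, BorelP K (V t)) -> BorelP K (universal_step V).
Proof.
  intros HV.
  assert (i01 := iota_neq 0 1 ltac:(discriminate)).
  assert (KK : card_le (K * K) K) by (exists psi; exact psi_inj).
  assert (TK : card_le T K) by (exists e; exact e_inj).
  assert (KK1 : card_le K K) by (exists (fun x => x); intros x y E; exact E).
  assert (tagged : forall n v (A : pset K), BorelP K A ->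
            BorelP K (fun p => snd p (tag n) = v /\ A p)).
  { intros n v A HA. apply (BorelP_and i01); [apply (BorelP_snd_eq i01)|exact HA]. }
  assert (pieces : forall (Q : (K -> pset K) -> pset K),
            (forall W, (forall k, BorelP K (W k)) -> BorelP K (Q W)) ->
            BorelP K (fun p => exists t, snd p (tag 1) = e t /\
                        Q (fun k p' => V t (fst p', code_piece (snd p') k)) p)).
  { intros Q HQ. apply (BorelP_ex _ TK). intros t.
    apply (BorelP_and i01); [apply (BorelP_snd_eq i01)|].
    apply HQ. intros k. exact (BorelP_reindex_snd (iota 0) (slot k) _ (slot_inj k) (HV t)). }
  apply (BorelP_or i01); [|apply (BorelP_or i01)].
  - apply tagged, (BorelP_eval i01 _ _ KK).
  - apply tagged, (pieces (fun W p => exists k, W k p)).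
    intros W HW. exact (BorelP_ex _ KK1 HW).
  - apply tagged, (pieces (fun W p => forall k, W k p)).
    intros W HW. exact (BorelP_all _ KK1 HW).
Qed.

Lemma code_exists (zeta : K -> K -> K) (v0 v1 v2 : K) :
  exists xi, (forall k, code_piece xi k = zeta k) /\
    xi (tag 0) = v0 /\ xi (tag 1) = v1 /\ xi (tag 2) = v2.
Proof.
  pose (phi (d : K * K + nat) := match d with inl (k, x) => slot k x | inr n => tag n end).
  assert (phi_inj : injective phi).
  { assert (i01 := iota_neq 0 1 ltac:(discriminate)).
    intros [[k x]|m] [[k' x']|n] E; unfold phi, slot, tag in E; apply psi_inj in E.
    - injection E as E. apply psi_inj in E. injection E as -> ->. reflexivity.
    - injection E as E _. destruct (i01 E).
    - injection E as E _. destruct (i01 (eq_sym E)).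
    - injection E as E. apply iota_inj in E. congruence. }
  destruct (exists_extension (inr 0) phi
    (fun d => match d with inl (k, x) => zeta k x | inr 0 => v0 | inr 1 => v1 | inr _ => v2 end)
    phi_inj) as [xi Hxi].
  exists xi. split; [|exact (conj (Hxi (inr 0)) (conj (Hxi (inr 1)) (Hxi (inr 2))))].
  intros k. apply functional_extensionality. intros x. exact (Hxi (inl (k, x))).
Qed.

Lemma codes_of_family (t : T) (U : pset K) (F : K -> (K -> K) -> Prop) :
  universal_for (Some t) U -> (forall k, Sigma K lt (Some t) (F k)) ->
  exists zeta : K -> K -> K, forall k eta, F k eta <-> U (eta, zeta k).
Proof.
  intros HU HF.
  destruct (choice_on (fun x => x) (fun _ => True)
              (fun k xi => forall eta, F k eta <-> U (eta, xi))) as [zeta Hzeta].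
  - intros k _. exact (HU (F k) (HF k)).
  - exists zeta. intros k. exact (Hzeta k I).
Qed.

Lemma universal_step_universal (b : option T) (V : T -> pset K) :
  (forall t, olt lt (Some t) b -> universal_for (Some t) (V t)) ->
  universal_for b (universal_step V).
Proof.
  intros HV A HA.
  assert (i01 := iota_neq 0 1 ltac:(discriminate)).
  assert (i02 := iota_neq 0 2 ltac:(discriminate)).
  assert (i12 := iota_neq 1 2 ltac:(discriminate)).
  destruct (Sigma_cases K (iota 0) lt b A HA)
    as [[i [j Hij]]|[(t & F & tb & HF & HAF)|(t & F & tb & HF & HAF)]].
  - destruct (code_exists (fun _ x => x) (iota 0) i j) as (xi & _ & E0 & E1 & E2).
    exists xi. intros eta. rewrite Hij. unfold universal_step; simpl.
    rewrite E0, E1, E2. split; [auto|].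
    intros [[_ H]|[[H _]|[H _]]]; [exact H|congruence|congruence].
  - destruct (codes_of_family t (V t) F (HV t tb) HF) as [zeta Hzeta].
    destruct (code_exists zeta (iota 1) (e t) (e t)) as (xi & Exi & E0 & E1 & _).
    exists xi. intros eta. rewrite HAF. unfold universal_step; simpl.
    rewrite E0, E1. split.
    + intros [k Hk]. right; left. split; [reflexivity|]. exists t. split; [reflexivity|].
      exists k. rewrite Exi. apply Hzeta. exact Hk.
    + intros [[H _]|[[_ (t' & Et & k & Hk)]|[H _]]]; [congruence| |congruence].
      apply e_inj in Et. subst t'. rewrite Exi in Hk. exists k. apply Hzeta. exact Hk.
  - destruct (codes_of_family t (V t) F (HV t tb) HF) as [zeta Hzeta].
    destruct (code_exists zeta (iota 2) (e t) (e t)) as (xi & Exi & E0 & E1 & _).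
    exists xi. intros eta. rewrite HAF. unfold universal_step; simpl.
    rewrite E0, E1. split.
    + intros Hk. right; right. split; [reflexivity|]. exists t. split; [reflexivity|].
      intros k. rewrite Exi. apply Hzeta, Hk.
    + intros [[H _]|[[H _]|[_ (t' & Et & Hk)]]]; [congruence|congruence|].
      apply e_inj in Et. subst t'. intros k. apply Hzeta. rewrite <- Exi. apply Hk.
Qed.

Theorem exists_universal_BorelP (b : option T) :
  exists U, BorelP K U /\ universal_for b U.
Proof.
  induction b as [b IH] using (well_founded_induction (olt_wf lt lt_wf)).
  destruct (choice_on (fun _ => False) (fun _ : T => True)
    (fun t V => BorelP K V /\ (olt lt (Some t) b -> universal_for (Some t) V))) as [V HV].
  { intros t _. destruct (classic (olt lt (Some t) b)) as [tb|tb].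
    - destruct (IH (Some t) tb) as [U [BU HU]]. exists U. auto.
    - exists (fun _ => False). split; [apply BP_empty; auto|intros H; contradiction]. }
  exists (universal_step V). split.
  - apply BorelP_universal_step. intros t. exact (proj1 (HV t I)).
  - apply universal_step_universal. intros t tb. exact (proj2 (HV t I) tb).
Qed.

End Universal.

Theorem lemma3p16 (K : Type) (HK : regular K)
  (T : Type) (lt : T -> T -> Prop) (Hwo : well_order lt) (HT : card_le T K) :
  exists R : (K -> K) * (K -> K) -> Prop,
    BorelP K R /\
    forall A : (K -> K) -> Prop, Sigma K lt None A ->
      exists xi : K -> K, forall eta : K -> K, A eta <-> R (eta, xi).
Proof.
  (* only the infinitude of K is used, not its regularity *)
  destruct HK as [[iota iota_inj] _].
  destruct (card_le_prod_self K iota iota_inj) as [psi psi_inj].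
  destruct HT as [e e_inj].
  destruct Hwo as (_ & _ & _ & lt_wf).
  exact (exists_universal_BorelP K iota psi iota_inj psi_inj T lt e lt_wf e_inj None).
Qed.
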